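(* If $\Lambda$ is a subgroup of a group $\Gamma$, then $\mathrm{Lit}(\Lambda)\le\mathrm{Lit}(\Gamma)$.
   Context: $T_1(\Gamma)$ is the space of all $f\colon\Gamma\to\mathbf{C}$ for which there exist $f_1,f_2\colon\Gamma\times\Gamma\to\mathbf{C}$ with $f(x^{-1}y)=f_1(x,y)+f_2(x,y)$ for all $x,y$, $\sup_x\sum_y|f_1(x,y)|<\infty$, $\sup_y\sum_x|f_2(x,y)|<\infty$; $\mathrm{Lit}(\Gamma)=\inf\{p>0:T_1(\Gamma)\subseteq\ell^p(\Gamma)\}\in[0,\infty]$. *)

From HB Require Import structures.
From mathcomp Require Import all_boot all_order all_algebra.
From mathcomp Require Import all_classical all_reals.
From mathcomp Require Import ereal esum exp.
From mathcomp.real_closed Require Import complex.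
Set Implicit Arguments. Unset Strict Implicit. Unset Printing Implicit Defensive.
Import Order.TTheory GRing.Theory Num.Theory.
Local Open Scope classical_set_scope.
Local Open Scope ring_scope.

Record groupOn (G : Type) := GroupOn {
  gmul : G -> G -> G;
  ginv : G -> G;
  gone : G;
  gmulA : forall x y z, gmul x (gmul y z) = gmul (gmul x y) z;
  gmul1 : forall x, gmul gone x = x;
  gmulV : forall x, gmul (ginv x) x = gone }.

Definition is_subgroup (G : Type) (g : groupOn G) (H : set G) : Prop :=
  H (gone g) /\ (forall x y, H x -> H y -> H (gmul g x y)) /\
  (forall x, H x -> H (ginv g x)).

Section Sub.
Variables (G : Type) (g : groupOn G) (H : set G) (hH : is_subgroup g H).
Let S := {x : G | H x}.
Definition sub_mul (a b : S) : S :=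
  exist _ (gmul g (proj1_sig a) (proj1_sig b))
    (proj1 (proj2 hH) _ _ (proj2_sig a) (proj2_sig b)).
Definition sub_inv (a : S) : S :=
  exist _ (ginv g (proj1_sig a)) (proj2 (proj2 hH) _ (proj2_sig a)).
Definition sub_one : S := exist _ (gone g) (proj1 hH).
Lemma sub_mulA (x y z : S) : sub_mul x (sub_mul y z) = sub_mul (sub_mul x y) z.
Proof. apply: eq_exist; exact: gmulA. Qed.
Lemma sub_mul1 (x : S) : sub_mul sub_one x = x.
Proof. case: x => x hx; apply: eq_exist; exact: gmul1. Qed.
Lemma sub_mulV (x : S) : sub_mul (sub_inv x) x = sub_one.
Proof. apply: eq_exist; exact: gmulV. Qed.
Definition subgroupOn : groupOn {x : G | H x} :=
  GroupOn sub_mulA sub_mul1 sub_mulV.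
End Sub.

Local Open Scope ereal_scope.

Definition T1 (R : realType) (G : Type) (g : groupOn G) : set (G -> R[i]) :=
  [set f | exists f1 f2 : G -> G -> R[i],
     (forall x y, f (gmul g (ginv g x) y) = (f1 x y + f2 x y)%R) /\
     ereal_sup [set \esum_(y in [set: {classic G}]) (Normc.normc (f1 x y))%:E
               | x in [set: G]] < +oo /\
     ereal_sup [set \esum_(x in [set: {classic G}]) (Normc.normc (f2 x y))%:E
               | y in [set: G]] < +oo].

Definition lp (R : realType) (G : Type) (p : R) : set (G -> R[i]) :=
  [set f | \esum_(x in [set: {classic G}]) ((Normc.normc (f x)) `^ p)%:E < +oo].

(* Lit(Gamma) = inf { p > 0 : T_1(Gamma) subset ell^p(Gamma) } in [0, +oo]
   (inf of the empty set is +oo). *)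
Definition Lit (R : realType) (G : Type) (g : groupOn G) : \bar R :=
  ereal_inf [set p%:E | p in [set p : R | (0 < p)%R /\ @T1 R G g `<=` @lp R G p]].

From HB Require Import structures.
From mathcomp Require Import all_boot all_order all_algebra.
From mathcomp Require Import all_classical all_reals.
From mathcomp Require Import ereal esum exp.
From mathcomp.real_closed Require Import complex.
Set Implicit Arguments. Unset Strict Implicit. Unset Printing Implicit Defensive.
Import Order.TTheory GRing.Theory Num.Theory.
Local Open Scope classical_set_scope.
Local Open Scope ring_scope.
Local Open Scope ereal_scope.
Declare Scope group_on_scope.

(* Extend f in T_1(Lambda) by zero to Gamma.  Pick a representative r(x) of
   each left coset x Lambda; then x^-1 y = (r(x)^-1 x)^-1 (r(y)^-1 y) whenever
   x and y lie in the same coset, so the kernels f_i(r(x)^-1 x, r(y)^-1 y) on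
   pairs in a common coset (and 0 elsewhere) decompose the extension.  Each of
   their row and column sums is, after the translation y = r(x) b, a row or
   column sum of f_i over Lambda, so the extension lies in T_1(Gamma).  Its
   ell^p-sum is that of f, hence every exponent p with
   T_1(Gamma) <= ell^p(Gamma) also satisfies T_1(Lambda) <= ell^p(Lambda). *)

Section GroupTheory.
Variables (G : Type) (g : groupOn G).
Local Notation "x * y" := (gmul g x y) : group_on_scope.
Local Notation "x ^-1" := (ginv g x) : group_on_scope.
Local Notation "1" := (gone g) : group_on_scope.
Local Open Scope group_on_scope.

Lemma gmulVr x : x * x^-1 = 1.
Proof.
rewrite -[LHS](gmul1 g) -[in LHS](gmulV g x^-1).
by rewrite -gmulA [_ * (x * _)]gmulA gmulV gmul1 gmulV.
Qed.

Lemma gmul1r x : x * 1 = x.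
Proof. by rewrite -(gmulV g x) gmulA gmulVr gmul1. Qed.

Lemma ginv_uniq a b : a * b = 1 -> a = b^-1.
Proof. by move=> ab1; rewrite -[a]gmul1r -(gmulVr b) gmulA ab1 gmul1. Qed.

Lemma ginvK x : (x^-1)^-1 = x.
Proof. by apply/esym/ginv_uniq; rewrite gmulVr. Qed.

Lemma ginvM x y : (x * y)^-1 = y^-1 * x^-1.
Proof.
by apply/esym/ginv_uniq; rewrite -gmulA [x^-1 * _]gmulA gmulV gmul1 gmulV.
Qed.

Lemma ginv1 : 1^-1 = 1.
Proof. by apply/esym/ginv_uniq; rewrite gmul1. Qed.

Lemma gmulKV x y : x^-1 * (x * y) = y.
Proof. by rewrite gmulA gmulV gmul1. Qed.

Lemma gmulK x y : x * (x^-1 * y) = y.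
Proof. by rewrite gmulA gmulVr gmul1. Qed.

End GroupTheory.

Section LeftCosets.
Variables (G : Type) (g : groupOn G) (H : set G) (hH : is_subgroup g H).
Local Notation "x * y" := (gmul g x y) : group_on_scope.
Local Notation "x ^-1" := (ginv g x) : group_on_scope.
Local Notation "1" := (gone g) : group_on_scope.
Local Open Scope group_on_scope.
Local Notation same_coset x y := (H (x^-1 * y)).
Local Notation sub := {x : G | H x}.

Lemma subgroup1 : H 1.
Proof. exact: hH.1. Qed.

Lemma subgroupM x y : H x -> H y -> H (x * y).
Proof. exact: hH.2.1. Qed.

Lemma subgroupV x : H x -> H x^-1.
Proof. exact: hH.2.2. Qed.

Lemma same_coset_refl x : same_coset x x.
Proof. by rewrite gmulV; exact: subgroup1. Qed.

Lemma same_coset_sym x y : same_coset x y -> same_coset y x.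
Proof. by move=> /subgroupV; rewrite ginvM ginvK. Qed.

Lemma same_coset_trans x y z :
  same_coset x y -> same_coset y z -> same_coset x z.
Proof. by move=> xy yz; have := subgroupM xy yz; rewrite -gmulA gmulK. Qed.

Definition coset_rep (x : G) : G :=
  @xget {classic G} 1 [set z | same_coset x z].

Lemma coset_repP x : same_coset x (coset_rep x).
Proof.
exact: (@xgetI {classic G} _ [set z | same_coset x z] x (same_coset_refl x)).
Qed.

Lemma coset_rep_eq x y : same_coset x y -> coset_rep x = coset_rep y.
Proof.
move=> xy; rewrite /coset_rep; f_equal.
apply/funext => z /=; apply/propext; split; apply: same_coset_trans => //.
exact: same_coset_sym.
Qed.

Lemma same_coset_rep_mulr x b : H b -> same_coset x (coset_rep x * b).
Proof.
by move=> Hb; apply: same_coset_trans (coset_repP x) _; rewrite gmulKV.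
Qed.

Definition coset_offset (x : G) : sub :=
  exist _ ((coset_rep x)^-1 * x) (same_coset_sym (coset_repP x)).

Lemma coset_offset_rep x (b : sub) :
  coset_offset (coset_rep x * proj1_sig b) = b.
Proof.
case: b => b Hb; apply: eq_exist => /=.
by rewrite -(coset_rep_eq (same_coset_rep_mulr x Hb)) gmulKV.
Qed.

Lemma coset_offsetE x y : same_coset x y ->
  x^-1 * y = (proj1_sig (coset_offset x))^-1 * proj1_sig (coset_offset y).
Proof.
move=> xy /=; rewrite -(coset_rep_eq xy) ginvM ginvK -gmulA.
by rewrite [coset_rep x * _]gmulA gmulVr gmul1.
Qed.

Lemma esum_lcoset (R : realType) (c : G) (psi : G -> \bar R) :
  (forall y, ~ same_coset c y -> psi y = 0) ->
  \esum_(y in [set: {classic G}]) psi y =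
  \esum_(b in [set: {classic sub}]) psi (c * proj1_sig b).
Proof.
move=> psi0.
rewrite -(esum_image [set: {classic sub}]
            (fun b : {classic sub} => (c * proj1_sig b : {classic G})) psi).
  rewrite esum_mkcond [in RHS]esum_mkcond; apply: eq_esum => y _.
  rewrite in_setT; case: ifPn => // /negP; rewrite inE /= => y_notin.
  apply: psi0 => cy; apply: y_notin.
  by exists (exist _ _ cy) => //=; rewrite gmulK.
move=> [a Ha] [b Hb] _ _ /= ab; apply: eq_exist.
by rewrite -(gmulKV g c a) ab gmulKV.
Qed.

Variable R : realType.

Definition extend0 (f : sub -> R[i]) (y : G) : R[i] :=
  if pselect (H y) is left Hy then f (exist _ y Hy) else 0%R.

Lemma extend0E (f : sub -> R[i]) y (b : sub) :
  y = proj1_sig b -> extend0 f y = f b.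
Proof.
move=> ->; rewrite /extend0; case: pselect => [Hb|]; last first.
  by case; exact: proj2_sig.
by congr f; case: b Hb => b Hb Hb' /=; apply: eq_exist.
Qed.

Lemma extend0_out (f : sub -> R[i]) y : ~ H y -> extend0 f y = 0%R.
Proof. by rewrite /extend0; case: pselect. Qed.

Definition coset_kernel (k : sub -> sub -> R[i]) (x y : G) : R[i] :=
  if pselect (same_coset x y) then k (coset_offset x) (coset_offset y) else 0%R.

Lemma esum_coset_kernel_row (k : sub -> sub -> R[i]) x :
  \esum_(y in [set: {classic G}]) (Normc.normc (coset_kernel k x y))%:E =
  \esum_(b in [set: {classic sub}]) (Normc.normc (k (coset_offset x) b))%:E.
Proof.
rewrite (esum_lcoset (c := coset_rep x)).
  apply: eq_esum => b _; rewrite /coset_kernel coset_offset_rep.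
  case: pselect => // not_xb; exfalso; apply: not_xb.
  by apply: same_coset_rep_mulr; exact: proj2_sig.
move=> y rep_y; rewrite /coset_kernel; case: pselect => [xy|not_xy].
  by case: rep_y; exact: same_coset_trans (same_coset_sym (coset_repP x)) xy.
by rewrite Normc.normc0.
Qed.

Lemma esum_coset_kernel_col (k : sub -> sub -> R[i]) y :
  \esum_(x in [set: {classic G}]) (Normc.normc (coset_kernel k x y))%:E =
  \esum_(b in [set: {classic sub}]) (Normc.normc (k b (coset_offset y)))%:E.
Proof.
rewrite (esum_lcoset (c := coset_rep y)).
  apply: eq_esum => b _; rewrite /coset_kernel coset_offset_rep.
  case: pselect => // not_by; exfalso; apply: not_by; apply: same_coset_sym.
  by apply: same_coset_rep_mulr; exact: proj2_sig.
move=> x rep_x; rewrite /coset_kernel; case: pselect => [xy|not_xy].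
  case: rep_x; apply: same_coset_trans (same_coset_sym (coset_repP y)) _.
  exact: same_coset_sym.
by rewrite Normc.normc0.
Qed.

Lemma T1_extend0 (f : sub -> R[i]) :
  @T1 R _ (subgroupOn hH) f -> @T1 R G g (extend0 f).
Proof.
case=> f1 [f2 [f_split [rows1 cols2]]].
exists (coset_kernel f1), (coset_kernel f2); split; [|split].
- move=> x y; rewrite /coset_kernel; case: pselect => [xy|not_xy].
    pose b := sub_mul hH (sub_inv hH (coset_offset x)) (coset_offset y).
    by rewrite (@extend0E f _ b); [exact: f_split | exact: coset_offsetE].
  by rewrite extend0_out // addr0.
- apply: le_lt_trans rows1; apply: ge_ereal_sup => _ [x _ <-].
  rewrite esum_coset_kernel_row; apply: ereal_sup_ubound.
  by exists (coset_offset x).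
- apply: le_lt_trans cols2; apply: ge_ereal_sup => _ [y _ <-].
  rewrite esum_coset_kernel_col; apply: ereal_sup_ubound.
  by exists (coset_offset y).
Qed.

Lemma lp_extend0 (p : R) (f : sub -> R[i]) : (0 < p)%R ->
  @lp R G p (extend0 f) -> @lp R _ p f.
Proof.
move=> p_gt0; rewrite /lp /= (esum_lcoset (c := 1)).
  by congr (_ < _); apply: eq_esum => b _; rewrite (@extend0E f _ b) // gmul1.
move=> y; rewrite ginv1 gmul1 => y_notin.
by rewrite extend0_out // Normc.normc0 powR0 // gt_eqF.
Qed.

Lemma T1_sub_lp_subgroup (p : R) : (0 < p)%R ->
  @T1 R G g `<=` @lp R G p -> @T1 R _ (subgroupOn hH) `<=` @lp R _ p.
Proof. by move=> p_gt0 T1_lp f /T1_extend0 /T1_lp; exact: lp_extend0. Qed.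

End LeftCosets.

Unset Implicit Arguments.
Set Strict Implicit.

Theorem proposition3p4 (R : realType) (G : Type) (g : groupOn G) (H : set G)
  (hH : is_subgroup g H) :
  @Lit R _ (subgroupOn hH) <= @Lit R G g.
Proof.
apply: ereal_inf_le_tmp => _ [p [p_gt0 T1_lp] <-]; exists p => //.
by split; [exact: p_gt0 | exact: T1_sub_lp_subgroup].
Qed.
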